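(* Assume the setting in the context. (a) Assume Conditions (MM), (GG), (JS-cts) and (JD-jump). Suppose that for every $f\in\mathcal{D}_{\mathcal{X}}$ there exist $u_+\in\mathcal{X}^{\mathcal{U}}$ and $u_-\in\mathcal{X}^{\mathcal{V}}$ with $(\widehat Lu_+)|_{\mathcal{U}}=(\widehat Lu_-)|_{\mathcal{V}}=0$ and $\widetilde{\operatorname{Tr}}^{\mathcal{U}}_{\mathcal{X}}u_+=\widetilde{\operatorname{Tr}}^{\mathcal{V}}_{\mathcal{X}}u_-=f$. Then $\widetilde{\operatorname{Tr}}^{\mathcal{U}}_{\mathcal{X}}\widehat{\mathbf{S}}^L_{\mathcal{U}}:\mathcal{N}_{\mathcal{X}}\to\mathcal{D}_{\mathcal{X}}$ is onto. If moreover there is $C_0<\infty$ such that for every $f\in\mathcal{D}_{\mathcal{X}}$ such a pair can be chosen with $\|u_+\|_{\mathcal{X}^{\mathcal{U}}}\le C_0\|f\|_{\mathcal{D}_{\mathcal{X}}}$ and $\|u_-\|_{\mathcal{X}^{\mathcal{V}}}\le C_0\|f\|_{\mathcal{D}_{\mathcal{X}}}$, then there is $C_1$ such that every $f\in\mathcal{D}_{\mathcal{X}}$ equals $\widetilde{\operatorname{Tr}}^{\mathcal{U}}_{\mathcal{X}}\widehat{\mathbf{S}}^L_{\mathcal{U}}g$ for some $g\in\mathcal{N}_{\mathcal{X}}$ with $\|g\|_{\mathcal{N}_{\mathcal{X}}}\le C_1\|f\|_{\mathcal{D}_{\mathcal{X}}}$. (b) Assume Conditions (TT), (GG), (JD-cts)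 and (JS-jump). Suppose that for every $g\in\mathcal{N}_{\mathcal{X}}$ there exist $u_+\in\mathcal{X}^{\mathcal{U}}$ and $u_-\in\mathcal{X}^{\mathcal{V}}$ with $(\widehat Lu_+)|_{\mathcal{U}}=(\widehat Lu_-)|_{\mathcal{V}}=0$ and $\widehat{\mathbf{M}}^{\mathcal{U}}_Bu_+=\widehat{\mathbf{M}}^{\mathcal{V}}_Bu_-=g$. Then $\widehat{\mathbf{M}}^{\mathcal{U}}_B\widehat{\mathbf{D}}^B_{\mathcal{U}}:\mathcal{D}_{\mathcal{X}}\to\mathcal{N}_{\mathcal{X}}$ is onto. If moreover there is $C_0<\infty$ such that for every $g\in\mathcal{N}_{\mathcal{X}}$ such a pair can be chosen with $\|u_+\|_{\mathcal{X}^{\mathcal{U}}}\le C_0\|g\|_{\mathcal{N}_{\mathcal{X}}}$ and $\|u_-\|_{\mathcal{X}^{\mathcal{V}}}\le C_0\|g\|_{\mathcal{N}_{\mathcal{X}}}$, then there is $C_1$ such that every $g\in\mathcal{N}_{\mathcal{X}}$ equals $\widehat{\mathbf{M}}^{\mathcal{U}}_B\widehat{\mathbf{D}}^B_{\mathcal{U}}f$ for some $f\in\mathcal{D}_{\mathcal{X}}$ with $\|f\|_{\mathcal{D}_{\mathcal{X}}}\le C_1\|g\|_{\mathcal{N}_{\mathcal{X}}}$.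
   Context: Let $\mathcal{X}^{\mathcal{U}}$, $\mathcal{X}^{\mathcal{V}}$, $\mathcal{D}_{\mathcal{X}}$, $\mathcal{N}_{\mathcal{X}}$ be quasi-Banach spaces. For $\mathcal{O}\in\{\mathcal{U},\mathcal{V}\}$: let $u\mapsto(\widehat Lu)|_{\mathcal{O}}$ be a linear operator on $\mathcal{X}^{\mathcal{O}}$, let $\mathcal{K}^{\mathcal{O}}=\{u\in\mathcal{X}^{\mathcal{O}}:(\widehat Lu)|_{\mathcal{O}}=0\}$, and let $\widetilde{\operatorname{Tr}}^{\mathcal{O}}_{\mathcal{X}}:\mathcal{K}^{\mathcal{O}}\to\mathcal{D}_{\mathcal{X}}$, $\widehat{\mathbf{M}}^{\mathcal{O}}_B:\mathcal{K}^{\mathcal{O}}\to\mathcal{N}_{\mathcal{X}}$, $\widehat{\mathbf{D}}^B_{\mathcal{O}}:\mathcal{D}_{\mathcal{X}}\to\mathcal{X}^{\mathcal{O}}$, $\widehat{\mathbf{S}}^L_{\mathcal{O}}:\mathcal{N}_{\mathcal{X}}\to\mathcal{X}^{\mathcal{O}}$ be linear operators. For $\mathcal{O}\in\{\mathcal U,\mathcal V\}$ consider: (T)$_{\mathcal{O}}$ $\widetilde{\operatorname{Tr}}^{\mathcal{O}}_{\mathcal{X}}$ is bounded $\mathcal{K}^{\mathcal{O}}\to\mathcal{D}_{\mathcal{X}}$; (M)$_{\mathcal{O}}$ $\widehat{\mathbf{M}}^{\mathcal{O}}_B$ is bounded $\mathcal{K}^{\mathcal{O}}\to\mathcal{N}_{\mathcal{X}}$;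 (G)$_{\mathcal{O}}$ every $u\in\mathcal{K}^{\mathcal{O}}$ satisfies $u=-\widehat{\mathbf{D}}^B_{\mathcal{O}}(\widetilde{\operatorname{Tr}}^{\mathcal{O}}_{\mathcal{X}}u)+\widehat{\mathbf{S}}^L_{\mathcal{O}}(\widehat{\mathbf{M}}^{\mathcal{O}}_Bu)$. Condition (TT) means (T)$_{\mathcal U}$ and (T)$_{\mathcal V}$ both hold; likewise (MM), (GG). Further conditions (each including that the potentials involved lie in the respective $\mathcal K^{\mathcal O}$, so the expressions are defined): (JS-cts) $\widetilde{\operatorname{Tr}}^{\mathcal{U}}_{\mathcal{X}}(\widehat{\mathbf{S}}^L_{\mathcal{U}}g)-\widetilde{\operatorname{Tr}}^{\mathcal{V}}_{\mathcal{X}}(\widehat{\mathbf{S}}^L_{\mathcal{V}}g)=0$ for all $g\in\mathcal{N}_{\mathcal{X}}$; (JD-cts) $\widehat{\mathbf{M}}^{\mathcal{U}}_B(\widehat{\mathbf{D}}^B_{\mathcal{U}}f)-\widehat{\mathbf{M}}^{\mathcal{V}}_B(\widehat{\mathbf{D}}^B_{\mathcal{V}}f)=0$ for all $f\in\mathcal{D}_{\mathcal{X}}$; (JS-jump) $\widehat{\mathbf{M}}^{\mathcal{U}}_B(\widehat{\mathbf{S}}^L_{\mathcal{U}}g)+\widehat{\mathbf{M}}^{\mathcal{V}}_B(\widehat{\mathbf{S}}^L_{\mathcal{V}}g)=g$ for all $g\in\mathcal{N}_{\mathcal{X}}$; (JD-jump) $\widetilde{\operatorname{Tr}}^{\mathcal{U}}_{\mathcal{X}}(\widehat{\mathbf{D}}^B_{\mathcal{U}}f)+\widetilde{\operatorname{Tr}}^{\mathcal{V}}_{\mathcal{X}}(\widehat{\mathbf{D}}^B_{\mathcal{V}}f)=-f$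 for all $f\in\mathcal{D}_{\mathcal{X}}$. *)

(* Abstract quasi-Banach spaces over a numeric field K
   (covers K = R and K = C = R[i]). *)
From HB Require Import structures.
From mathcomp Require Import all_boot all_order all_algebra.
Set Implicit Arguments. Unset Strict Implicit. Unset Printing Implicit Defensive.
Import Order.TTheory GRing.Theory Num.Theory.
Local Open Scope ring_scope.

Definition quasi_norm (K : numFieldType) (V : lmodType K) (nrm : V -> K) : Prop :=
  [/\ (forall x, 0 <= nrm x),
      (forall x, nrm x = 0 -> x = 0),
      (forall (a : K) x, nrm (a *: x) = `|a| * nrm x) &
      (exists C : K, forall x y, nrm (x + y) <= C * (nrm x + nrm y))].

Definition qn_cauchy (K : numFieldType) (V : lmodType K) (nrm : V -> K)
  (u : nat -> V) : Prop :=
  forall eps : K, 0 < eps -> exists N : nat,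
    forall m n, (N <= m)%N -> (N <= n)%N -> nrm (u m - u n) < eps.

Definition qn_converges (K : numFieldType) (V : lmodType K) (nrm : V -> K)
  (u : nat -> V) (l : V) : Prop :=
  forall eps : K, 0 < eps -> exists N : nat,
    forall n, (N <= n)%N -> nrm (u n - l) < eps.

Definition quasi_banach (K : numFieldType) (V : lmodType K) (nrm : V -> K) : Prop :=
  quasi_norm nrm /\
  forall u : nat -> V, qn_cauchy nrm u -> exists l, qn_converges nrm u l.

Record QBSpace (K : numFieldType) := QBS {
  qb_car : lmodType K;
  qb_norm : qb_car -> K;
  qb_axiom : quasi_banach qb_norm }.

Coercion qb_car : QBSpace >-> lmodType.
Notation "`[| x |]" := (qb_norm x) (format "`[| x |]") : ring_scope.

Definition lin (K : numFieldType) (V W : lmodType K) (T : V -> W) : Prop :=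
  forall (a : K) u v, T (a *: u + v) = a *: T u + T v.

Definition lin_on (K : numFieldType) (V W : lmodType K) (P : V -> Prop)
  (T : V -> W) : Prop :=
  forall (a : K) u v, P u -> P v -> T (a *: u + v) = a *: T u + T v.

(* the null space K^O = { u : (L u)|_O = 0 } *)
Definition kerP (K : numFieldType) (V W : lmodType K) (L : V -> W) (u : V) : Prop :=
  L u = 0.

Definition bounded_on (K : numFieldType) (X Z : QBSpace K) (P : X -> Prop)
  (T : X -> Z) : Prop :=
  exists C : K, forall u, P u -> `[| T u |] <= C * `[| u |].

Definition green (K : numFieldType) (X D N : QBSpace K) (W : lmodType K)
  (L : X -> W) (Tr : X -> D) (M : X -> N) (Dp : D -> X) (Sp : N -> X) : Prop :=
  forall u, kerP L u -> u = - Dp (Tr u) + Sp (M u).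

(** Both parts are pure algebra once the candidate preimage is guessed.
    For (a), Green's formula on each side gives [S (M u) = u + D (Tr u)],
    so for [g := M u+ + M u-] the continuity of the single layer and the
    jump of the double layer yield
    [Tr S g = Tr (u+ + D f) + Tr (u- + D f) = f + f - f = f].
    For (b) one takes [f := - Tr u+ - Tr u-] and argues symmetrically.
    The estimates follow because [g] (resp. [f]) is a sum of two values of
    bounded operators, and quasi-norms satisfy a triangle inequality up to
    a constant. *)
From mathcomp Require Import all_boot all_order all_algebra.
Import Order.TTheory GRing.Theory Num.Theory.
Local Open Scope ring_scope.
Set Implicit Arguments. Unset Strict Implicit.

Section LinearMaps.
Variables (K : numFieldType) (V W : lmodType K).
Implicit Types (T : V -> W) (P : V -> Prop) (u v : V).

Lemma linD T u v : lin T -> T (u + v) = T u + T v.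
Proof. by move=> linT; rewrite -[u]scale1r linT !scale1r. Qed.

Lemma linN T u : lin T -> T (- u) = - T u.
Proof.
move=> linT; have T0 : T 0 = 0.
  by apply: (addrI (T 0)); rewrite -linD // !addr0.
by rewrite -[- u]addr0 -scaleN1r linT T0 addr0 scaleN1r.
Qed.

Lemma lin_onD P T u v : lin_on P T -> P u -> P v -> T (u + v) = T u + T v.
Proof. by move=> linT Pu Pv; rewrite -[u]scale1r linT // !scale1r. Qed.

Lemma lin_onB P T u v : lin_on P T -> P u -> P v -> T (u - v) = T u - T v.
Proof.
by move=> linT Pu Pv; rewrite addrC -scaleN1r linT // scaleN1r addrC.
Qed.

End LinearMaps.

Section QuasiNorms.
Variable K : numFieldType.

Lemma qn_ge0 (X : QBSpace K) (x : X) : 0 <= `[| x |].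
Proof. by case: (qb_axiom X) => [[]]. Qed.

Lemma ler_norm_mull (a b C : K) : 0 <= a -> 0 <= b -> a <= C * b -> a <= `|C| * b.
Proof.
move=> a_ge0; have [->|b_neq0] := eqVneq b 0; first by rewrite !mulr0.
move=> b_ge0 leCb.
have b_gt0 : 0 < b by rewrite lt_def b_neq0.
have C_ge0 : 0 <= C by rewrite -(pmulr_lge0 _ b_gt0) (le_trans a_ge0).
by rewrite ger0_norm.
Qed.

Lemma qn_normN (X : QBSpace K) (x : X) : `[| - x |] = `[| x |].
Proof.
by case: (qb_axiom X) => [[_ _ normZ _] _]; rewrite -scaleN1r normZ normrN1 mul1r.
Qed.

Lemma qn_triangle (X : QBSpace K) :
  exists2 C : K, 0 <= C & forall x y : X, `[| x + y |] <= C * (`[| x |] + `[| y |]).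
Proof.
case: (qb_axiom X) => [[_ _ _ [C leC]] _]; exists `|C| => // x y.
by apply: ler_norm_mull; rewrite ?addr_ge0 ?qn_ge0.
Qed.

Lemma bounded_onP (X Z : QBSpace K) (P : X -> Prop) (T : X -> Z) :
  bounded_on P T ->
  exists2 C : K, 0 <= C & forall u, P u -> `[| T u |] <= C * `[| u |].
Proof.
case=> C leC; exists `|C| => // u Pu.
by apply: ler_norm_mull; rewrite ?qn_ge0 ?leC.
Qed.

Lemma bounded_on_sum (X1 X2 Y Z : QBSpace K) (P1 : X1 -> Prop) (P2 : X2 -> Prop)
    (A1 : X1 -> Z) (A2 : X2 -> Z) (C0 : K) :
  bounded_on P1 A1 -> bounded_on P2 A2 ->
  exists C1 : K, forall (y : Y) x1 x2, P1 x1 -> P2 x2 ->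
    `[| x1 |] <= C0 * `[| y |] -> `[| x2 |] <= C0 * `[| y |] ->
    `[| A1 x1 + A2 x2 |] <= C1 * `[| y |].
Proof.
move=> /bounded_onP[C' C'_ge0 leA1] /bounded_onP[C'' C''_ge0 leA2].
have [Cq Cq_ge0 leq] := qn_triangle Z.
exists (Cq * (C' * C0 + C'' * C0)) => y x1 x2 P1x1 P2x2 le_x1 le_x2.
apply: (le_trans (leq _ _)); rewrite -mulrA ler_wpM2l // mulrDl -!mulrA.
by apply: lerD; [apply: le_trans (leA1 _ P1x1) _ | apply: le_trans (leA2 _ P2x2) _];
   rewrite ler_wpM2l.
Qed.

End QuasiNorms.

Section GreenFormula.
Variables (K : numFieldType) (X D N : QBSpace K) (Y : lmodType K) (L : X -> Y).
Variables (Tr : X -> D) (M : X -> N) (Dp : D -> X) (Sp : N -> X).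
Hypothesis greenL : green L Tr M Dp Sp.

Lemma green_single_layer u : kerP L u -> Sp (M u) = u + Dp (Tr u).
Proof. by move=> Ku; rewrite {2}(greenL Ku) addrAC addNr add0r. Qed.

Lemma green_double_layer u : kerP L u -> Dp (Tr u) = Sp (M u) - u.
Proof. by move=> Ku; rewrite green_single_layer // addrC addKr. Qed.

End GreenFormula.

Section Transmission.
Variables (K : numFieldType) (XU XV D N : QBSpace K) (YU YV : lmodType K).
Variables (LU : XU -> YU) (LV : XV -> YV) (TrU : XU -> D) (TrV : XV -> D).
Variables (MU : XU -> N) (MV : XV -> N) (DU : D -> XU) (DV : D -> XV).
Variables (SU : N -> XU) (SV : N -> XV).
Hypotheses (linTrU : lin_on (kerP LU) TrU) (linTrV : lin_on (kerP LV) TrV).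
Hypotheses (linMU : lin_on (kerP LU) MU) (linMV : lin_on (kerP LV) MV).
Hypotheses (linDU : lin DU) (linDV : lin DV) (linSU : lin SU).
Hypotheses (greenU : green LU TrU MU DU SU) (greenV : green LV TrV MV DV SV).

Lemma single_layer_trace_of_conormals
    (contS : forall g, kerP LU (SU g) /\ kerP LV (SV g) /\ TrU (SU g) - TrV (SV g) = 0)
    (jumpD : forall f, kerP LU (DU f) /\ kerP LV (DV f) /\ TrU (DU f) + TrV (DV f) = - f)
    up um f :
  kerP LU up -> kerP LV um -> TrU up = f -> TrV um = f ->
  TrU (SU (MU up + MV um)) = f.
Proof.
move=> Kup Kum Trup Trum.
have [KSup _] := contS (MU up).
have [KSum [_ /subr0_eq contSum]] := contS (MV um).
have [KDf [KDVf jumpDf]] := jumpD f.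
rewrite (linD _ _ linSU) (lin_onD linTrU KSup KSum) contSum.
rewrite (green_single_layer greenU Kup) (green_single_layer greenV Kum) Trup Trum.
rewrite (lin_onD linTrU Kup KDf) (lin_onD linTrV Kum KDVf) Trup Trum.
by rewrite addrACA jumpDf addrK.
Qed.

Lemma double_layer_conormal_of_traces
    (contD : forall f, kerP LU (DU f) /\ kerP LV (DV f) /\ MU (DU f) - MV (DV f) = 0)
    (jumpS : forall g, kerP LU (SU g) /\ kerP LV (SV g) /\ MU (SU g) + MV (SV g) = g)
    up um g :
  kerP LU up -> kerP LV um -> MU up = g -> MV um = g ->
  MU (DU (- TrU up - TrV um)) = g.
Proof.
move=> Kup Kum Mup Mum.
have [KDup _] := contD (- TrU up).
have [KDum [_ /subr0_eq contDum]] := contD (- TrV um).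
have [KSg [KSVg jumpSg]] := jumpS g.
rewrite (linD _ _ linDU) (lin_onD linMU KDup KDum) contDum (linN _ linDU) (linN _ linDV).
rewrite (green_double_layer greenU Kup) (green_double_layer greenV Kum) Mup Mum.
rewrite !opprB (lin_onB linMU Kup KSg) (lin_onB linMV Kum KSVg) Mup Mum.
by rewrite addrACA -opprD jumpSg addrK.
Qed.

End Transmission.

Theorem theorem6p4 (K : numFieldType) (XU XV D N : QBSpace K)
  (YU YV : lmodType K) (LU : XU -> YU) (LV : XV -> YV)
  (TrU : XU -> D) (TrV : XV -> D) (MU : XU -> N) (MV : XV -> N)
  (DU : D -> XU) (DV : D -> XV) (SU : N -> XU) (SV : N -> XV)
  (linLU : lin LU) (linLV : lin LV)
  (linTrU : lin_on (kerP LU) TrU) (linTrV : lin_on (kerP LV) TrV)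
  (linMU : lin_on (kerP LU) MU) (linMV : lin_on (kerP LV) MV)
  (linDU : lin DU) (linDV : lin DV) (linSU : lin SU) (linSV : lin SV) :
  (* (a) *)
  ((* (MM) *) bounded_on (kerP LU) MU -> bounded_on (kerP LV) MV ->
   (* (GG) *) green LU TrU MU DU SU -> green LV TrV MV DV SV ->
   (* (JS-cts) *)
   (forall g : N, kerP LU (SU g) /\ kerP LV (SV g) /\
      TrU (SU g) - TrV (SV g) = 0) ->
   (* (JD-jump) *)
   (forall f : D, kerP LU (DU f) /\ kerP LV (DV f) /\
      TrU (DU f) + TrV (DV f) = - f) ->
   (forall f : D, exists (up : XU) (um : XV),
      [/\ LU up = 0, LV um = 0, TrU up = f & TrV um = f]) ->
   (forall f : D, exists g : N, TrU (SU g) = f) /\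
   ((exists C0 : K, forall f : D, exists (up : XU) (um : XV),
       [/\ LU up = 0, LV um = 0, TrU up = f, TrV um = f &
           `[| up |] <= C0 * `[| f |] /\ `[| um |] <= C0 * `[| f |]]) ->
    exists C1 : K, forall f : D, exists g : N,
      TrU (SU g) = f /\ `[| g |] <= C1 * `[| f |]))
  /\
  (* (b) *)
  ((* (TT) *) bounded_on (kerP LU) TrU -> bounded_on (kerP LV) TrV ->
   (* (GG) *) green LU TrU MU DU SU -> green LV TrV MV DV SV ->
   (* (JD-cts) *)
   (forall f : D, kerP LU (DU f) /\ kerP LV (DV f) /\
      MU (DU f) - MV (DV f) = 0) ->
   (* (JS-jump) *)
   (forall g : N, kerP LU (SU g) /\ kerP LV (SV g) /\
      MU (SU g) + MV (SV g) = g) ->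
   (forall g : N, exists (up : XU) (um : XV),
      [/\ LU up = 0, LV um = 0, MU up = g & MV um = g]) ->
   (forall g : N, exists f : D, MU (DU f) = g) /\
   ((exists C0 : K, forall g : N, exists (up : XU) (um : XV),
       [/\ LU up = 0, LV um = 0, MU up = g, MV um = g &
           `[| up |] <= C0 * `[| g |] /\ `[| um |] <= C0 * `[| g |]]) ->
    exists C1 : K, forall g : N, exists f : D,
      MU (DU f) = g /\ `[| f |] <= C1 * `[| g |])).
Proof.
split=> [bMU bMV gU gV contS jumpD solvable | bTU bTV gU gV contD jumpS solvable].
- have preimage := single_layer_trace_of_conormals linTrU linTrV linSU
    gU gV contS jumpD.
  split=> [f | [C0 solvable_bounded]].
    have [up [um [Kup Kum Trup Trum]]] := solvable f.
    by exists (MU up + MV um); apply: preimage Trup Trum.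
  have [C1 le_sum] := bounded_on_sum D C0 bMU bMV; exists C1 => f.
  have [up [um [Kup Kum Trup Trum [le_up le_um]]]] := solvable_bounded f.
  exists (MU up + MV um); split; first exact: preimage Trup Trum.
  exact: le_sum.
- have preimage := double_layer_conormal_of_traces linMU linMV linDU linDV
    gU gV contD jumpS.
  split=> [g | [C0 solvable_bounded]].
    have [up [um [Kup Kum Mup Mum]]] := solvable g.
    by exists (- TrU up - TrV um); apply: preimage Mup Mum.
  have [C1 le_sum] := bounded_on_sum N C0 bTU bTV; exists C1 => g.
  have [up [um [Kup Kum Mup Mum [le_up le_um]]]] := solvable_bounded g.
  exists (- TrU up - TrV um); split; first exact: preimage Mup Mum.
  by rewrite -opprD qn_normN; apply: le_sum.
Qed.
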